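(* For every positive integer $n$, $\mathsf{pf}_n(132)=\mathsf{pf}_n(231)$ and $\mathsf{pf}_n(213)=\mathsf{pf}_n(312)$.
   Context: $[n]=\{1,\dots,n\}$. A tuple $p=(p_1,\dots,p_n)\in[n]^n$ is a parking function if its weakly increasing rearrangement $(p'_1,\dots,p'_n)$ satisfies $p'_i\le i$ for all $i$. To a parking function $p$ associate the permutation $\pi(p)$ obtained by listing, for $s=1,\dots,n$ in turn, the indices $j$ with $p_j=s$ in increasing order, and concatenating. A permutation $\pi$ avoids $\sigma\in\mathfrak S_3$ if no length-3 subsequence of $\pi$ is order-isomorphic to $\sigma$. $\mathsf{pf}_n(\sigma)$ is the number of parking functions $p$ of length $n$ with $\pi(p)$ avoiding $\sigma$. *)

From mathcomp Require Import all_boot.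
Set Implicit Arguments. Unset Strict Implicit. Unset Printing Implicit Defensive.

(* A tuple p in [n]^n is a finite function 'I_n -> 'I_n.+1 whose values are
   all nonzero (so p_j ranges over {1,...,n}); the position j : 'I_n stands
   for index j+1. *)
Definition in_range (n : nat) (p : {ffun 'I_n -> 'I_n.+1}) : bool :=
  [forall j, 0 < (p j : nat)].

Definition rearr (n : nat) (p : {ffun 'I_n -> 'I_n.+1}) : seq nat :=
  sort leq [seq (p j : nat) | j <- enum 'I_n].

(* p'_i <= i for all i = 1..n  (0-indexed: nth i <= i+1) *)
Definition parking (n : nat) (p : {ffun 'I_n -> 'I_n.+1}) : bool :=
  in_range p && [forall i : 'I_n, nth 0 (rearr p) i <= i.+1].

Definition pi_of (n : nat) (p : {ffun 'I_n -> 'I_n.+1}) : seq nat :=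
  flatten [seq [seq (val j).+1 | j <- enum 'I_n & (p j : nat) == s]
          | s <- iota 1 n].

Definition contains3 (s sigma : seq nat) : bool :=
  [exists i : 'I_(size s), exists j : 'I_(size s), exists k : 'I_(size s),
     (i < j) && (j < k) &&
     [forall a : 'I_3, forall b : 'I_3,
        (nth 0 s (nth 0 [:: val i; val j; val k] a)
           < nth 0 s (nth 0 [:: val i; val j; val k] b))
        == (nth 0 sigma a < nth 0 sigma b)]].

Definition avoids3 (s sigma : seq nat) : bool := ~~ contains3 s sigma.

Definition pf (n : nat) (sigma : seq nat) : nat :=
  #|[set p : {ffun 'I_n -> 'I_n.+1} | parking p && avoids3 (pi_of p) sigma]|.

From Pilot Require Import Defs.
From mathcomp Require Import all_boot zify.
Set Implicit Arguments. Unset Strict Implicit. Unset Printing Implicit Defensive.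

(* pi(p) lists the positions j in increasing order of the pair (p_j, j).  Hence
   an occurrence of a length-3 pattern in pi(p) is an occurrence of a "cut"
   pattern in the word w = p_1 ... p_n: a letter v, then a letter y, then a
   letter z, with y on one side of a threshold at v and z on the other.  For
   213 and 312 the threshold splits the letters into [< v] and [>= v]; for 231
   and 132, read in the reversed word, into [<= v] and [> v].  A word avoids
   such a pattern iff after each letter v all later letters of one side come
   before all later letters of the other side, recursively inside both blocks.
   Recursively swapping the two blocks ([regroup]) is therefore a bijection
   between the words avoiding the two patterns of each pair, and it only
   permutes the letters; since being a parking function only depends on the
   multiset of letters, the two counts agree. *)

Fixpoint avoids_triple (T : Type) (C : T -> T -> T -> bool) (s : seq T) : bool :=
  if s is x :: s' then pairwise (fun y z => ~~ C x y z) s' && avoids_triple C s'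
  else true.

Section Triples.
Variable T : Type.
Implicit Types (C : T -> T -> T -> bool) (s : seq T).

Lemma avoids_tripleP x0 C s :
  reflect (forall i j k, i < j -> j < k -> k < size s ->
             ~~ C (nth x0 s i) (nth x0 s j) (nth x0 s k))
          (avoids_triple C s).
Proof.
elim: s => [|x s IHs] /=; first by constructor.
apply: (iffP andP) => [[/(pairwiseP x0) x_free /IHs s_free] | free].
  move=> [|i] [|j] [|k] //= ij jk ks; last exact: s_free.
  by apply: x_free; rewrite ?inE //; lia.
split; last by apply/IHs => i j k ij jk ks; exact: (free i.+1 j.+1 k.+1).
by apply/(pairwiseP x0) => j k; rewrite !inE => js ks jk; exact: (free 0 j.+1 k.+1).
Qed.

Lemma avoids_triple_map (S : Type) (f : S -> T) C (s : seq S) :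
  avoids_triple C (map f s) = avoids_triple (fun x y z => C (f x) (f y) (f z)) s.
Proof. by elim: s => //= x s ->; rewrite pairwise_map. Qed.

Lemma pairwise_rev (r : rel T) s : pairwise r (rev s) = pairwise (fun x y => r y x) s.
Proof.
elim: s => //= x s IHs.
by rewrite rev_cons -cats1 pairwise_cat IHs allrel1r all_rev /= andbT andbC.
Qed.

Lemma avoids_triple_cat C s1 s2 :
  avoids_triple C (s1 ++ s2) =
  [&& avoids_triple C s1, avoids_triple C s2,
      all (fun x => pairwise (fun y z => ~~ C x y z) s2) s1
    & pairwise (fun x y => all (fun z => ~~ C x y z) s2) s1].
Proof.
elim: s1 => [|x s1 IHs1] /=; first by rewrite andbT.
rewrite pairwise_cat IHs1.
by apply/and5P/and5P => [[/and3P[? ? ?] ? ? ? ?] | [/andP[? ?] ? /andP[? ?] ? ?]];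
  split; rewrite //=; apply/and3P || apply/andP.
Qed.

Lemma avoids_triple_rev C s :
  avoids_triple C (rev s) = avoids_triple (fun x y z => C z y x) s.
Proof.
elim: s => //= x s IHs; rewrite rev_cons -cats1 avoids_triple_cat IHs /=.
rewrite pairwise_rev all_rev all_predT andbC.
by congr (_ && _); apply: eq_pairwise => y z; rewrite andbT.
Qed.

End Triples.

Section EqTriples.
Variable T : eqType.
Implicit Types (C : T -> T -> T -> bool) (s : seq T).

Lemma pairwise_in (r : rel T) s : {in s &, forall x y, r x y} -> pairwise r s.
Proof.
elim: s => //= x s IHs r_s; apply/andP; split.
  by apply/allP => y ys; apply: r_s; rewrite ?inE ?eqxx ?ys ?orbT.
by apply: IHs => y z ys zs; apply: r_s; rewrite inE ?ys ?zs orbT.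
Qed.

Lemma filter_nil_in (a : pred T) s : {in s, forall x, ~~ a x} -> [seq x <- s | a x] = [::].
Proof.
by move=> s_not_a; apply/eqP; rewrite -[_ == _]negbK -has_filter; apply/hasPn.
Qed.

Lemma avoids_triple_cat_sep C s1 s2 :
  {in s1 & s2, forall x z y, ~~ C x y z} ->
  avoids_triple C (s1 ++ s2) = avoids_triple C s1 && avoids_triple C s2.
Proof.
move=> cross; rewrite avoids_triple_cat.
have -> : all (fun x => pairwise (fun y z => ~~ C x y z) s2) s1.
  by apply/allP => x xs1; apply: pairwise_in => y z _ zs2; exact: cross.
have -> : pairwise (fun x y => all (fun z => ~~ C x y z) s2) s1.
  by apply: pairwise_in => x y xs1 _; apply/allP => z zs2; exact: cross.
by rewrite !andbT.
Qed.

End EqTriples.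

Section PairwiseOrder.
Variables (T : eqType) (r : rel T) (s : seq T).
Hypotheses (r_asym : {in s &, forall x y, r x y -> ~~ r y x}) (r_s : pairwise r s).

Lemma pairwise_index_lt x y : x \in s -> y \in s -> r x y -> index x s < index y s.
Proof.
move=> xs ys rxy; have nryx := r_asym xs ys rxy.
rewrite ltnNge leq_eqVlt; apply/negP => /orP[/eqP idx_yx | idx_lt].
  have y_x : y = x by rewrite -(nth_index x ys) idx_yx nth_index.
  by rewrite y_x in rxy nryx; rewrite rxy in nryx.
move/(pairwiseP x): r_s => /(_ (index y s) (index x s)).
by rewrite !inE !index_mem !nth_index // => /(_ ys xs idx_lt); apply/negP.
Qed.

Lemma avoids_triple_pairwiseP C :
  reflect {in s & &, forall x y z, r x y -> r y z -> ~~ C x y z}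
          (avoids_triple C s).
Proof.
apply: (iffP idP) => [s_free x y z xs ys zs rxy ryz | chain_free].
  move/(avoids_tripleP x): s_free => /(_ (index x s) (index y s) (index z s)).
  by rewrite !nth_index // index_mem; apply=> //; apply: pairwise_index_lt.
case s_eq: s => [//|x0 s']; rewrite -s_eq.
apply/(avoids_tripleP x0) => i j k ij jk ks.
have js := ltn_trans jk ks; have is_ := ltn_trans ij js.
move/(pairwiseP x0): r_s => r_nth.
by apply: chain_free; rewrite ?mem_nth //; apply: r_nth; rewrite ?inE.
Qed.

End PairwiseOrder.

Lemma pairwise_ltn_iota m n : pairwise ltn (iota m n).
Proof. by rewrite -sorted_pairwise ?iota_ltn_sorted //; exact: ltn_trans. Qed.

Definition cut_pattern (T : Type) (L : rel T) (x y z : T) : bool :=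
  L x y && ~~ L x z.

(* Rules out occurrences of [cut_pattern L] straddling the two blocks cut by a letter. *)
Definition cut_compatible (T : Type) (L : rel T) : Prop :=
  forall v x z, L v z -> ~~ L v x -> L x z && ~~ L z x.

Lemma cut_compatibleC (T : Type) (L L' : rel T) :
  (forall x y, L' x y = ~~ L x y) -> cut_compatible L -> cut_compatible L'.
Proof.
move=> L'E L_cut v x z; rewrite !L'E negbK => nLvz Lvx.
by rewrite negbK andbC; exact: L_cut Lvx nLvz.
Qed.

Section CutPattern.
Variables (T : eqType) (L : rel T).
Hypothesis L_cut : cut_compatible L.

Lemma avoids_cut_cons v g l :
  all (fun y => ~~ L v y) g -> all (L v) l ->
  avoids_triple (cut_pattern L) (v :: g ++ l) =
  avoids_triple (cut_pattern L) g && avoids_triple (cut_pattern L) l.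
Proof.
move=> /allP g_up /allP l_low /=.
rewrite avoids_triple_cat_sep => [|x z xg zl y]; last first.
  by case/andP: (L_cut (l_low z zl) (g_up x xg)) => Lxz _; rewrite /cut_pattern Lxz andbF.
rewrite pairwise_cat (_ : allrel _ g l) ?pairwise_in //.
- by move=> y z _ /l_low Lvz; rewrite /cut_pattern Lvz andbF.
- by move=> y z /g_up /negbTE Lvy; rewrite /cut_pattern Lvy.
by apply/allrelP => y z /g_up /negbTE Lvy; rewrite /cut_pattern Lvy.
Qed.

Lemma avoids_cut_blocks v r :
  avoids_triple (cut_pattern L) (v :: r) ->
  [/\ r = [seq y <- r | ~~ L v y] ++ [seq y <- r | L v y],
      avoids_triple (cut_pattern L) [seq y <- r | ~~ L v y]
    & avoids_triple (cut_pattern L) [seq y <- r | L v y]].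
Proof.
move=> vr_free; suff r_eq : r = [seq y <- r | ~~ L v y] ++ [seq y <- r | L v y].
  by move: vr_free; rewrite {1}r_eq avoids_cut_cons ?filter_all // => /andP[].
case/andP: vr_free => + _; elim: r => //= y r IHr /andP[y_free /IHr r_eq].
case Lvy: (L v y) => /=; last by rewrite -r_eq.
have r_low : all (L v) r.
  by apply: sub_all y_free => z; rewrite /cut_pattern Lvy negbK.
by rewrite (all_filterP r_low) filter_nil_in // => z /(allP r_low) ->.
Qed.

End CutPattern.

Fixpoint regroup (T : Type) (L : rel T) (k : nat) (s : seq T) : seq T :=
  if k is k'.+1 then
    if s is v :: r then
      v :: regroup L k' [seq y <- r | L v y] ++ regroup L k' [seq y <- r | ~~ L v y]
    else [::]
  else s.

Lemma perm_regroup (T : eqType) (L : rel T) k s : perm_eq (regroup L k s) s.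
Proof.
elim: k s => [|k IHk] [|v r] //=; rewrite perm_cons.
by apply: perm_trans (perm_cat (IHk _) (IHk _)) _; rewrite perm_filterC.
Qed.

Section Regroup.
Variables (T : eqType) (L L' : rel T).
Hypotheses (L'E : forall x y, L' x y = ~~ L x y) (L_cut : cut_compatible L).

Lemma all_regroup_filter v k r : all (fun y => ~~ L' v y) (regroup L k [seq y <- r | L v y]).
Proof.
rewrite (perm_all _ (perm_regroup _ _ _)).
by apply: sub_all (filter_all _ _) => y; rewrite L'E negbK.
Qed.

Lemma all_regroup_filterN v k r : all (L' v) (regroup L k [seq y <- r | ~~ L v y]).
Proof.
rewrite (perm_all _ (perm_regroup _ _ _)).
by apply: sub_all (filter_all _ _) => y; rewrite L'E.
Qed.

Lemma regroup_avoids k s :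
  size s <= k -> avoids_triple (cut_pattern L) s ->
  avoids_triple (cut_pattern L') (regroup L k s).
Proof.
elim: k s => [|k IHk] [|v r] // /ltnSE size_r.
case/(avoids_cut_blocks L_cut) => _ g_free l_free.
have size_filter_le (a : pred T) : size [seq y <- r | a y] <= k.
  by rewrite size_filter (leq_trans (count_size _ _)).
rewrite [regroup L _ _]/= avoids_cut_cons ?IHk ?size_filter_le //.
- exact: cut_compatibleC L'E L_cut.
- exact: all_regroup_filter.
exact: all_regroup_filterN.
Qed.

Lemma regroupK k s :
  size s <= k -> avoids_triple (cut_pattern L) s -> regroup L' k (regroup L k s) = s.
Proof.
elim: k s => [|k IHk] [|v r] // /ltnSE size_r.
case/(avoids_cut_blocks L_cut) => r_eq g_free l_free.
have size_filter_le (a : pred T) : size [seq y <- r | a y] <= k.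
  by rewrite size_filter (leq_trans (count_size _ _)).
have l_up := all_regroup_filter v k r; have g_low := all_regroup_filterN v k r.
rewrite /= !filter_cat (all_filterP l_up) (all_filterP g_low).
have g_nonL' : {in regroup L k [seq y <- r | ~~ L v y], forall y, ~~ ~~ L' v y}.
  by move=> y /(allP g_low) ->.
rewrite (filter_nil_in (allP l_up)) (filter_nil_in g_nonL') cats0 cat0s.
by rewrite !IHk ?size_filter_le // -r_eq.
Qed.

End Regroup.

Definition pattern3 (sigma : seq nat) (x y z : nat) : bool :=
  [forall a : 'I_3, forall b : 'I_3,
     (nth 0 [:: x; y; z] a < nth 0 [:: x; y; z] b) == (nth 0 sigma a < nth 0 sigma b)].

Lemma avoids3E s sigma : avoids3 s sigma = avoids_triple (pattern3 sigma) s.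
Proof.
have occE (i j k : nat) :
    [forall a : 'I_3, forall b : 'I_3,
       (nth 0 s (nth 0 [:: i; j; k] a) < nth 0 s (nth 0 [:: i; j; k] b))
         == (nth 0 sigma a < nth 0 sigma b)]
    = pattern3 sigma (nth 0 s i) (nth 0 s j) (nth 0 s k).
  have nth3 (a : 'I_3) :
      nth 0 s (nth 0 [:: i; j; k] a) = nth 0 [:: nth 0 s i; nth 0 s j; nth 0 s k] a.
    by case: a => [[|[|[|a]]]].
  by apply: eq_forallb => a; apply: eq_forallb => b; rewrite !nth3.
rewrite /avoids3 /contains3; apply/idP/(avoids_tripleP 0) => [no_occ i j k ij jk ks | free].
  apply: contra no_occ => occ; have js := ltn_trans jk ks; have is_ := ltn_trans ij js.
  apply/existsP; exists (Ordinal is_); apply/existsP; exists (Ordinal js).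
  by apply/existsP; exists (Ordinal ks); rewrite /= ij jk occE.
apply/negP => /existsP[i /existsP[j /existsP[k /andP[/andP[ij jk]]]]].
by rewrite occE; apply/negP: (free _ _ _ ij jk (ltn_ord k)).
Qed.

Lemma forall_ord3 (P : pred 'I_3) :
  [forall a, P a] = [&& P (@Ordinal 3 0 isT), P (@Ordinal 3 1 isT) & P (@Ordinal 3 2 isT)].
Proof.
apply/forallP/and3P => [P_all | [P0 P1 P2] [[|[|[|//]]] lt_a3]]; first by split.
- by rewrite (bool_irrelevance lt_a3 isT).
- by rewrite (bool_irrelevance lt_a3 isT).
- by rewrite (bool_irrelevance lt_a3 isT).
Qed.

Lemma pattern3_132 x y z : pattern3 [:: 1; 3; 2] x y z = (x < z < y).
Proof. by rewrite /pattern3 !forall_ord3 /= !eqb_id !eqbF_neg; lia. Qed.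

Lemma pattern3_231 x y z : pattern3 [:: 2; 3; 1] x y z = (z < x < y).
Proof. by rewrite /pattern3 !forall_ord3 /= !eqb_id !eqbF_neg; lia. Qed.

Lemma pattern3_213 x y z : pattern3 [:: 2; 1; 3] x y z = (y < x < z).
Proof. by rewrite /pattern3 !forall_ord3 /= !eqb_id !eqbF_neg; lia. Qed.

Lemma pattern3_312 x y z : pattern3 [:: 3; 1; 2] x y z = (y < z < x).
Proof. by rewrite /pattern3 !forall_ord3 /= !eqb_id !eqbF_neg; lia. Qed.

Section ParkingWords.
Variable n : nat.
Implicit Types (p q : {ffun 'I_n -> 'I_n.+1}) (s : seq nat) (C : nat -> nat -> nat -> bool).

Definition word p : seq nat := [seq (p j : nat) | j <- enum 'I_n].

Definition of_word s : {ffun 'I_n -> 'I_n.+1} := [ffun j : 'I_n => inord (nth 0 s j)].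

Lemma size_word p : size (word p) = n.
Proof. by rewrite size_map size_enum_ord. Qed.

Lemma nth_word p (j : 'I_n) : nth 0 (word p) j = p j.
Proof. by rewrite (nth_map j) ?size_enum_ord // nth_ord_enum. Qed.

Lemma of_wordK : cancel word of_word.
Proof. by move=> p; apply/ffunP => j; rewrite ffunE nth_word inord_val. Qed.

Lemma word_of_word_perm p s : perm_eq s (word p) -> word (of_word s) = s.
Proof.
move=> s_p; have size_s : size s = n by rewrite (perm_size s_p) size_word.
apply: (@eq_from_nth _ 0) => [|i]; rewrite size_word // => lt_in.
rewrite -[i]/(val (Ordinal lt_in)) nth_word ffunE inordK // ltnS.
have : nth 0 s i \in word p by rewrite -(perm_mem s_p) mem_nth // size_s.
by case/mapP => j _ ->; rewrite -ltnS.
Qed.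

Lemma in_range_word p : in_range p = all (fun x => 0 < x) (word p).
Proof.
by apply/forallP/allP => [p_pos _ /mapP[j _ ->] | p_pos j] //; apply/p_pos/map_f/mem_enum.
Qed.

Lemma parking_perm p q : perm_eq (word p) (word q) -> parking p = parking q.
Proof.
move=> pq; rewrite /parking !in_range_word (perm_all _ pq) (_ : rearr p = rearr q) //.
by apply/perm_sortP => //; [exact: leq_total | exact: leq_trans | exact: anti_leq].
Qed.

Definition pi_positions p : seq 'I_n :=
  flatten [seq [seq j <- enum 'I_n | (p j : nat) == v] | v <- iota 1 n].

Definition pi_before p : rel 'I_n :=
  fun i j => (p i < p j) || ((p i : nat) == p j) && (i < j).

(* [Defs.pi_of] is qualified because [prime] also exports a [pi_of]. *)
Lemma pi_ofE p : Defs.pi_of p = [seq (val j).+1 | j <- pi_positions p].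
Proof. by rewrite /Defs.pi_of map_flatten -map_comp. Qed.

Lemma mem_pi_positions p j : in_range p -> j \in pi_positions p.
Proof.
move=> /forallP/(_ j) pj_pos; apply/flattenP.
exists [seq i <- enum 'I_n | (p i : nat) == p j]; last by rewrite mem_filter eqxx mem_enum.
by apply: map_f; rewrite mem_iota; have := ltn_ord (p j); lia.
Qed.

Lemma pairwise_enum_ord : pairwise (fun i j : 'I_n => i < j) (enum 'I_n).
Proof. by have := pairwise_ltn_iota 0 n; rewrite -val_enum_ord pairwise_map. Qed.

Lemma pairwise_pi_before p : pairwise (pi_before p) (pi_positions p).
Proof.
rewrite /pi_positions; elim: (iota 1 n) (pairwise_ltn_iota 1 n) => //= v vs IHvs.
case/andP=> v_lt vs_lt; rewrite pairwise_cat IHvs // andbT; apply/andP; split.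
  apply/allrelP => i j; rewrite mem_filter => /andP[/eqP pi_v _].
  case/flattenP => _ /mapP[w w_vs ->]; rewrite mem_filter => /andP[/eqP pj_w _].
  by rewrite /pi_before pi_v pj_w; have /= -> := allP v_lt w w_vs.
apply: (@sub_in_pairwise _ [pred i | (p i : nat) == v] (fun i j : 'I_n => i < j)).
- by move=> i j /eqP pi_v /eqP pj_v ij; rewrite /pi_before pi_v pj_v eqxx ij orbT.
- exact: filter_all.
exact: pairwise_filter pairwise_enum_ord.
Qed.

Lemma pi_avoidsP p sigma : in_range p ->
  reflect (forall i j k, pi_before p i j -> pi_before p j k ->
             ~~ pattern3 sigma i.+1 j.+1 k.+1)
          (avoids3 (Defs.pi_of p) sigma).
Proof.
move=> p_range; rewrite avoids3E pi_ofE avoids_triple_map.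
have asym : {in pi_positions p &, forall i j, pi_before p i j -> ~~ pi_before p j i}.
  by move=> i j _ _; rewrite /pi_before; lia.
apply: (iffP (avoids_triple_pairwiseP asym (pairwise_pi_before p) _)) => free i j k.
  by apply: free; exact: mem_pi_positions.
by move=> _ _ _; exact: free.
Qed.

Lemma word_avoidsP p C :
  reflect (forall i j k : 'I_n, i < j -> j < k -> ~~ C (p i) (p j) (p k))
          (avoids_triple C (word p)).
Proof.
rewrite /word avoids_triple_map.
have asym : {in enum 'I_n &, forall i j : 'I_n, i < j -> ~~ (j < i)}.
  by move=> i j _ _; lia.
apply: (iffP (avoids_triple_pairwiseP asym pairwise_enum_ord _)) => free i j k.
  by apply: free; rewrite mem_enum.
by move=> _ _ _; exact: free.
Qed.

Lemma pi_avoids132 p : in_range p ->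
  avoids3 (Defs.pi_of p) [:: 1; 3; 2] = avoids_triple (cut_pattern ltn) (rev (word p)).
Proof.
move=> p_range; rewrite avoids_triple_rev.
apply/(pi_avoidsP _ p_range)/word_avoidsP => free i j k;
  have := free i k j; rewrite /pi_before /cut_pattern pattern3_132 /=; lia.
Qed.

Lemma pi_avoids231 p : in_range p ->
  avoids3 (Defs.pi_of p) [:: 2; 3; 1] = avoids_triple (cut_pattern geq) (rev (word p)).
Proof.
move=> p_range; rewrite avoids_triple_rev.
apply/(pi_avoidsP _ p_range)/word_avoidsP => free i j k.
  by have := free j k i; rewrite /pi_before /cut_pattern pattern3_231 /=; lia.
by have := free k i j; rewrite /pi_before /cut_pattern pattern3_231 /=; lia.
Qed.

Lemma pi_avoids213 p : in_range p ->
  avoids3 (Defs.pi_of p) [:: 2; 1; 3] = avoids_triple (cut_pattern gtn) (word p).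
Proof.
move=> p_range; apply/(pi_avoidsP _ p_range)/word_avoidsP => free i j k;
  have := free j i k; rewrite /pi_before /cut_pattern pattern3_213 /=; lia.
Qed.

Lemma pi_avoids312 p : in_range p ->
  avoids3 (Defs.pi_of p) [:: 3; 1; 2] = avoids_triple (cut_pattern leq) (word p).
Proof.
move=> p_range; apply/(pi_avoidsP _ p_range)/word_avoidsP => free i j k.
  by have := free k i j; rewrite /pi_before /cut_pattern pattern3_312 /=; lia.
by have := free j k i; rewrite /pi_before /cut_pattern pattern3_312 /=; lia.
Qed.

Definition avoiders C := [set p | parking p && avoids_triple C (word p)].

Lemma card_avoiders_le C C' (f g : seq nat -> seq nat) :
  (forall s, perm_eq (f s) s) ->
  (forall s, size s = n -> avoids_triple C s -> avoids_triple C' (f s)) ->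
  (forall s, size s = n -> avoids_triple C s -> g (f s) = s) ->
  #|avoiders C| <= #|avoiders C'|.
Proof.
move=> f_perm f_avoids gfK.
pose F p := of_word (f (word p)); pose G p := of_word (g (word p)).
have word_F p : word (F p) = f (word p) by apply: word_of_word_perm.
have FK : {in avoiders C, cancel F G}.
  by move=> p; rewrite inE => /andP[_ p_free]; rewrite /G word_F gfK ?size_word ?of_wordK.
rewrite -(card_in_imset (can_in_inj FK)); apply/subset_leq_card/subsetP => _ /imsetP[p + ->].
rewrite !inE word_F => /andP[p_park p_free].
by rewrite (@parking_perm _ p) ?p_park ?f_avoids ?word_F ?f_perm ?size_word.
Qed.

Lemma card_avoiders_rev C : #|avoiders (fun x y z => C z y x)| = #|avoiders C|.
Proof.
have rev_le C1 C2 : (forall s, avoids_triple C1 s -> avoids_triple C2 (rev s)) ->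
    #|avoiders C1| <= #|avoiders C2|.
  move=> C12; apply: (card_avoiders_le (f := rev) (g := rev)) => s.
  - by rewrite perm_rev.
  - by move=> _; exact: C12.
  by rewrite revK.
by apply/eqP; rewrite eqn_leq !rev_le // => s; rewrite avoids_triple_rev.
Qed.

Lemma card_avoiders_cut_le (L L' : rel nat) :
  (forall x y, L' x y = ~~ L x y) -> cut_compatible L ->
  #|avoiders (cut_pattern L)| <= #|avoiders (cut_pattern L')|.
Proof.
move=> L'E L_cut; apply: (card_avoiders_le (f := regroup L n) (g := regroup L' n)) => s.
- exact: perm_regroup.
- by move=> size_s; apply: regroup_avoids; rewrite ?size_s.
by move=> size_s; apply: regroupK; rewrite ?size_s.
Qed.

Lemma card_avoiders_cut (L L' : rel nat) :
  (forall x y, L' x y = ~~ L x y) -> cut_compatible L ->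
  #|avoiders (cut_pattern L)| = #|avoiders (cut_pattern L')|.
Proof.
move=> L'E L_cut; apply/eqP; rewrite eqn_leq !card_avoiders_cut_le //.
- by move=> x y; rewrite L'E negbK.
exact: cut_compatibleC L'E L_cut.
Qed.

Lemma pf_avoiders sigma C :
  (forall p, in_range p -> avoids3 (Defs.pi_of p) sigma = avoids_triple C (word p)) ->
  pf n sigma = #|avoiders C|.
Proof.
move=> piE; apply: eq_card => p; rewrite !inE.
by case p_park: (parking p) => //=; rewrite piE //; case/andP: p_park.
Qed.

Lemma pf_avoiders_rev sigma C :
  (forall p, in_range p -> avoids3 (Defs.pi_of p) sigma = avoids_triple C (rev (word p))) ->
  pf n sigma = #|avoiders C|.
Proof.
move=> piE; rewrite -card_avoiders_rev; apply: pf_avoiders => p /piE ->.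
exact: avoids_triple_rev.
Qed.

End ParkingWords.

Theorem proposition4p1 (n : nat) (hn : 0 < n) :
  pf n [:: 1; 3; 2] = pf n [:: 2; 3; 1] /\ pf n [:: 2; 1; 3] = pf n [:: 3; 1; 2].
Proof.
split.
- rewrite (pf_avoiders_rev (@pi_avoids132 n)) (pf_avoiders_rev (@pi_avoids231 n)).
  by apply: card_avoiders_cut => [x y | v x z /=]; [exact: leqNgt | lia].
rewrite (pf_avoiders (@pi_avoids213 n)) (pf_avoiders (@pi_avoids312 n)).
by apply: card_avoiders_cut => [x y | v x z /=]; [exact: leqNgt | lia].
Qed.
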